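(* Let $G$ be a scheduling game on related machines with a global priority list $\pi=(1,2,\dots,n)$ (all machines share the same list), where each job may have either positive or negative deterioration (not necessarily delay-averse). Run List Scheduling: set $\ell_j=0$ for all machines; for $i=1,\dots,n$, choose $j^\star\in\arg\min_j\big(\ell_j+p_i(\ell_j)/s_j\big)$, assign job $i$ to $j^\star$ and set $\ell_{j^\star}\leftarrow\ell_{j^\star}+p_i(\ell_{j^\star})/s_{j^\star}$. Then the resulting profile is a pure Nash equilibrium of $G$.
   Context: Scheduling game: a finite set $N$ of $n\ge1$ jobs (players) and a set $M$ of machines. Machine $j$ has speed $s_j>0$ and a priority list $\pi_j$, a bijection $N\to\{1,\dots,n\}$; job $u$ has higher priority than $v$ on $j$ iff $\pi_j(u)<\pi_j(v)$. Each job $i$ has a processing-time function $p_i$: with positive deterioration $p_i(t)=b_i+a_it$ ($b_i,a_i\ge0$), with negative deterioration $p_i(t)=\max\{\tau_i,b_i-a_it\}$ ($b_i,a_i\ge0$, $\tau_i>0$). A profile $\sigma\in M^N$ assigns each job to a machine. On machine $j$, the jobs assigned to it, listed in increasing $\pi_j$-order as $i_1,i_2,\dots$, are processed without idle time (jobs cannot wait): $S_{i_1}(\sigma)=0$, $C_{i_k}(\sigma)=S_{i_k}(\sigma)+p_{i_k}(S_{i_k}(\sigma))/s_j$, $S_{i_{k+1}}(\sigma)=C_{i_k}(\sigma)$. The cost of job $i$ is $C_i(\sigma)$. A pure Nash equilibrium (NE) is a profile in which no job can strictly decrease its completion time by unilaterally changing its machine. *)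

From mathcomp Require Import all_boot all_order all_algebra all_fingroup.
Set Implicit Arguments. Unset Strict Implicit. Unset Printing Implicit Defensive.
Import Order.TTheory GRing.Theory Num.Theory.
Local Open Scope ring_scope.

(* Processing-time function of a job: positive deterioration b + a t,
   or negative deterioration max(tau, b - a t). *)
Inductive ptime (R : realFieldType) : Type :=
  | PosDet (b a : R)
  | NegDet (b a tau : R).

Definition ptime_valid (R : realFieldType) (p : ptime R) : Prop :=
  match p with
  | PosDet b a => 0 <= b /\ 0 <= a
  | NegDet b a tau => 0 <= b /\ 0 <= a /\ 0 < tau
  end.

Definition ptime_eval (R : realFieldType) (p : ptime R) (t : R) : R :=
  match p with
  | PosDet b a => b + a * t
  | NegDet b a tau => Num.max tau (b - a * t)
  end.

Section Game.
Variables (R : realFieldType) (n : nat) (M : finType).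
Variables (s : M -> R) (pi : M -> {perm 'I_n}) (p : 'I_n -> ptime R).

(* pi j maps a job to its rank (0-based) on machine j; lower rank = higher
   priority. The jobs listed in increasing pi_j-order: *)
Definition prio_order (j : M) : seq 'I_n := [seq (pi j)^-1%g r | r <- enum 'I_n].

Definition jobs_on (sigma : 'I_n -> M) (j : M) : seq 'I_n :=
  [seq k <- prio_order j | sigma k == j].

Definition run_machine (j : M) (t0 : R) (ks : seq 'I_n) : R :=
  foldl (fun t k => t + ptime_eval (p k) t / s j) t0 ks.

Definition start_time (sigma : 'I_n -> M) (i : 'I_n) : R :=
  let l := jobs_on sigma (sigma i) in
  run_machine (sigma i) 0 (take (index i l) l).

Definition completion_time (sigma : 'I_n -> M) (i : 'I_n) : R :=
  start_time sigma i + ptime_eval (p i) (start_time sigma i) / s (sigma i).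

Definition deviate (sigma : 'I_n -> M) (i : 'I_n) (j : M) : 'I_n -> M :=
  fun k => if k == i then j else sigma k.

Definition is_NE (sigma : 'I_n -> M) : Prop :=
  forall (i : 'I_n) (j : M),
    ~ (completion_time (deviate sigma i j) i < completion_time sigma i).

(* List Scheduling with global order 1..n (0..n-1 here): the load vector
   of the algorithm after the first k jobs have been assigned by sigma. *)
Definition ls_load (sigma : 'I_n -> M) (k : nat) (j : M) : R :=
  foldl (fun l (i : 'I_n) => if sigma i == j then l + ptime_eval (p i) l / s j else l)
        0 (take k (enum 'I_n)).

(* sigma is a possible output of List Scheduling (arbitrary tie-breaking):
   each job i is assigned to a machine minimizing l_j + p_i(l_j)/s_j,
   where l is the load vector produced by the previous assignments. *)
Definition LS_output (sigma : 'I_n -> M) : Prop :=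
  forall (i : 'I_n) (j : M),
    ls_load sigma i (sigma i) + ptime_eval (p i) (ls_load sigma i (sigma i)) / s (sigma i)
    <= ls_load sigma i j + ptime_eval (p i) (ls_load sigma i j) / s j.

End Game.

From mathcomp Require Import all_boot all_order all_algebra all_fingroup.
Import Order.TTheory GRing.Theory Num.Theory.
Local Open Scope ring_scope.

(* With a global priority list, the jobs that run before job i on a machine
   are exactly the lower-indexed jobs assigned there, so the start time of i
   on machine j depends only on the assignment of jobs 0..i-1 and equals the
   List Scheduling load of j at the moment i is placed.  Since List Scheduling
   put i on a machine minimising load + processing time, no unilateral move of
   i lowers its completion time. *)

Lemma foldl_if_filter (T A : Type) (P : pred T) (f : A -> T -> A) a s :
  foldl (fun l x => if P x then f l x else l) a s = foldl f a (filter P s).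
Proof. by elim: s a => //= x s IH a; case: (P x). Qed.

Section GlobalPriority.
Variables (R : realFieldType) (n : nat) (M : finType).
Variables (s : M -> R) (pi : M -> {perm 'I_n}) (p : 'I_n -> ptime R).
Hypothesis pi_global : forall j, pi j = 1%g.

Lemma prio_order_global (j : M) : prio_order pi j = enum 'I_n.
Proof.
rewrite /prio_order pi_global -[RHS]map_id.
by apply: eq_map => r; rewrite invg1 perm1.
Qed.

Lemma ls_loadE (sigma : 'I_n -> M) (k : nat) (j : M) :
  ls_load s p sigma k j =
  run_machine s p j 0 [seq i <- take k (enum 'I_n) | sigma i == j].
Proof. exact: foldl_if_filter. Qed.

Lemma mem_take_enum_ord (k i : 'I_n) : (k \in take i (enum 'I_n)) = (k < i)%N.
Proof. by rewrite in_take ?mem_enum // index_enum_ord. Qed.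

Lemma start_time_global (sigma : 'I_n -> M) (i : 'I_n) :
  start_time s pi p sigma i = ls_load s p sigma i (sigma i).
Proof.
rewrite /start_time /jobs_on prio_order_global ls_loadE.
set e := enum 'I_n.
have split_e : e = take i e ++ i :: drop i.+1 e.
  by rewrite -{2}(nth_ord_enum i i) -drop_nth ?cat_take_drop // size_enum_ord.
rewrite {1 2}split_e filter_cat /= eqxx take_pivot //.
by rewrite mem_filter mem_take_enum_ord ltnn andbF.
Qed.

Lemma ls_load_eq_prefix (sigma tau : 'I_n -> M) (i : 'I_n) (j : M) :
  (forall k : 'I_n, (k < i)%N -> tau k = sigma k) ->
  ls_load s p tau i j = ls_load s p sigma i j.
Proof.
move=> tau_eq; rewrite !ls_loadE; congr run_machine.
by apply: eq_in_filter => k; rewrite mem_take_enum_ord => /tau_eq ->.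
Qed.

Lemma start_time_deviate (sigma : 'I_n -> M) (i : 'I_n) (j : M) :
  start_time s pi p (deviate sigma i j) i = ls_load s p sigma i j.
Proof.
rewrite start_time_global /deviate eqxx.
by apply: ls_load_eq_prefix => k lt_ki; case: eqP => // k_i; rewrite k_i ltnn in lt_ki.
Qed.

End GlobalPriority.

Theorem theorem3 (R : realFieldType) (n : nat) (M : finType)
    (s : M -> R) (pi : M -> {perm 'I_n}) (p : 'I_n -> ptime R)
    (sigma : 'I_n -> M) :
  (0 < n)%N ->
  (forall j, 0 < s j) ->
  (forall i, ptime_valid (p i)) ->
  (forall j, pi j = 1%g) ->
  LS_output s p sigma ->
  is_NE s pi p sigma.
Proof.
move=> _ _ _ pi_global ls_sigma i j.
rewrite /completion_time start_time_deviate // start_time_global //.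
rewrite {1}/deviate eqxx.
by rewrite ltNge ls_sigma.
Qed.
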